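(* Let $p$ be an odd prime. Then $$\prod_{\substack{i,j=1\\ p\nmid i^2-j^2}}^{(p-1)/2}(i^2-j^2)\equiv-\left(\frac{2}{p}\right)\pmod p.$$
   Context: $\left(\frac{\cdot}{p}\right)$ denotes the Legendre symbol. *)

From HB Require Import structures.
From mathcomp Require Import all_boot all_order all_algebra.
Set Implicit Arguments. Unset Strict Implicit. Unset Printing Implicit Defensive.
Import Order.TTheory GRing.Theory Num.Theory.
Local Open Scope ring_scope.

Definition legendre (a : int) (p : nat) : int :=
  if (p%:Z %| a)%Z then 0
  else if [exists x : 'I_p, (p%:Z %| (x%:Z) ^+ 2 - a)%Z] then 1 else -1.

From HB Require Import structures.
From mathcomp Require Import all_boot all_order all_algebra.
From mathcomp Require Import finfield zify.
Set Implicit Arguments.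
Unset Strict Implicit.
Unset Printing Implicit Defensive.

Import Order.TTheory GRing.Theory Num.Theory.
Local Open Scope ring_scope.

(* Write p = 2n + 1 and work in F_p.  The squares a_j = j^2, 1 <= j <= n, are
   the n distinct roots of X^n - 1, so X^n - 1 = prod_j (X - a_j).  Hence the
   row product prod_(j <> i) (a_i - a_j) is the derivative n a_i^(n-1) = n / a_i
   of X^n - 1 at a_i, and the constant coefficient gives prod_j a_j = -(-1)^n.
   The whole product is therefore -(-n)^n = -(1/2)^n = -2^n, since -2n = 1, and
   2^n is the Legendre symbol (2/p) by Euler's criterion.  Finally, for i, j in
   [1, n], p divides i^2 - j^2 exactly when i = j. *)

Lemma expf_card_pred (F : finFieldType) (x : F) : x != 0 -> x ^+ #|F|.-1 = 1.
Proof.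
move=> x_neq0; apply: (mulfI x_neq0).
by rewrite -exprS prednK ?expf_card ?mulr1 // (ltn_trans _ (finNzRing_gt1 F)).
Qed.

Lemma horner_deriv_XsubC_mul (R : comNzRingType) (a : R) (q : {poly R}) :
  (('X - a%:P) * q)^`().[a] = q.[a].
Proof. by rewrite derivM derivXsubC mul1r hornerD hornerM hornerXsubC subrr mul0r addr0. Qed.

Section OddPrimeField.

Variables (p n : nat).
Hypotheses (p_pr : prime p) (p_def : p = n.*2.+1).

Local Notation sq j := ((j%:R : 'F_p) ^+ 2).

Lemma half_gt0 : (0 < n)%N.
Proof. by have := prime_gt1 p_pr; rewrite p_def; lia. Qed.

Lemma natFp_eq0 (m : nat) : ((m%:R : 'F_p) == 0) = (p %| m)%N.
Proof. by rewrite (dvdn_pcharf (pchar_Fp p_pr)). Qed.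

Lemma intFp_eq0 (z : int) : ((z%:~R : 'F_p) == 0) = (p%:Z %| z)%Z.
Proof. by rewrite (dvdz_pcharf (pchar_Fp p_pr)). Qed.

Lemma expFp_double_half (x : 'F_p) : x != 0 -> x ^+ n.*2 = 1.
Proof.
have -> : n.*2 = #|'F_p|.-1 by rewrite card_Fp // {1}p_def.
exact: expf_card_pred.
Qed.

Lemma half_range_neq0 (j : nat) : (1 <= j <= n)%N -> (j%:R : 'F_p) != 0.
Proof. by move=> j_range; rewrite natFp_eq0 gtnNdvd //; lia. Qed.

Lemma sq_expn_half (j : nat) : (1 <= j <= n)%N -> sq j ^+ n = 1.
Proof. by move=> j_range; rewrite -exprM mul2n expFp_double_half ?half_range_neq0. Qed.

Lemma sq_half_inj (i j : nat) :
  (1 <= i <= n)%N -> (1 <= j <= n)%N -> sq i = sq j -> i = j.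
Proof.
move=> i_range j_range /eqP; rewrite -subr_eq0 subr_sqr mulf_eq0 subr_eq0.
rewrite -natrD natFp_eq0; case/orP=> [/eqP/(congr1 val)|/dvdn_leq].
  by rewrite /= !val_Fp_nat // !modn_small //; lia.
by lia.
Qed.

Lemma prod_XsubC_sq : \prod_(1 <= j < n.+1) ('X - (sq j)%:P) = 'X^n - 1.
Proof.
rewrite -(big_map (fun j => sq j) xpredT (fun a => 'X - a%:P)).
set rs := map _ _.
have rs_roots : all (root ('X^n - 1)) rs.
  apply/allP=> z /mapP[j]; rewrite mem_index_iota => j_range ->.
  by rewrite rootE !hornerE sq_expn_half ?subrr.
have rs_uniq : uniq_roots rs.
  rewrite uniq_rootsE map_inj_in_uniq ?iota_uniq // => i j.
  by rewrite !mem_index_iota => i_range j_range; apply: sq_half_inj; lia.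
have size_Xn_sub1 : size ('X^n - 1 : {poly 'F_p}) = (size rs).+1.
  by rewrite size_map size_iota subn1 -polyC1 size_XnsubC ?half_gt0.
rewrite [RHS](all_roots_prod_XsubC size_Xn_sub1 rs_roots rs_uniq).
by rewrite -polyC1 (monicP (monicXnsubC 1 half_gt0)) scale1r.
Qed.

Lemma prod_sq : \prod_(1 <= j < n.+1) sq j = - (-1) ^+ n.
Proof.
have := congr1 (horner^~ 0) prod_XsubC_sq.
rewrite /= horner_prod !hornerE expr0n eqn0Ngt half_gt0 /= sub0r.
under eq_bigr do rewrite hornerXsubC sub0r -mulN1r.
rewrite big_split /= prodr_const_nat subn1 /=.
by move/(canRL (signrMK n)); rewrite mulrN1.
Qed.

Lemma prod_sq_sub_row (i : nat) : (1 <= i <= n)%N ->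
  \prod_(1 <= j < n.+1 | j != i) (sq i - sq j) = n%:R / sq i.
Proof.
move=> i_range.
have sq_i_neq0 : sq i != 0 by rewrite expf_neq0 ?half_range_neq0.
have split_i : \prod_(1 <= j < n.+1) ('X - (sq j)%:P) =
    ('X - (sq i)%:P) * \prod_(1 <= j < n.+1 | j != i) ('X - (sq j)%:P).
  by rewrite (bigD1_seq i) ?mem_index_iota ?iota_uniq.
have := horner_deriv_XsubC_mul (sq i) (\prod_(1 <= j < n.+1 | j != i) ('X - (sq j)%:P)).
rewrite -split_i prod_XsubC_sq derivB derivXn derivC subr0 hornerMn hornerXn.
rewrite horner_prod; under eq_bigr do rewrite hornerXsubC.
move <-; rewrite mulr_natl; congr (_ *+ _).
apply: (mulfI sq_i_neq0); rewrite mulfV // -exprS prednK ?half_gt0 //.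
exact: sq_expn_half.
Qed.

Lemma two_neq0 : (2%:R : 'F_p) != 0.
Proof. by rewrite natFp_eq0 gtnNdvd //; have := half_gt0; lia. Qed.

Lemma opp_half_mul2 : - (n%:R : 'F_p) * 2%:R = 1.
Proof.
have : ((n.*2.+1)%:R : 'F_p) == 0 by rewrite natFp_eq0 -p_def.
by rewrite -[n.*2.+1]addn1 -[n.*2]muln2 natrD natrM addr_eq0 mulNr => /eqP ->; rewrite opprK.
Qed.

Lemma prod_sq_sub : \prod_(1 <= i < n.+1) \prod_(1 <= j < n.+1 | j != i) (sq i - sq j)
  = - 2%:R ^+ n.
Proof.
rewrite (eq_big_nat _ _ (F2 := fun i => n%:R / sq i)); last exact: prod_sq_sub_row.
rewrite big_split prodr_const_nat subn1 /=.
rewrite prodfV prod_sq invrN invr_sign mulrN -exprMn mulrN1.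
have two_expn_sq : (2%:R : 'F_p) ^+ n * 2%:R ^+ n = 1.
  by rewrite -exprD addnn expFp_double_half ?two_neq0.
congr (- _); apply: (mulIf (expf_neq0 n two_neq0)).
by rewrite -exprMn opp_half_mul2 expr1n two_expn_sq.
Qed.

Lemma legendre_Euler (a : int) : ((legendre a p)%:~R : 'F_p) = (a%:~R : 'F_p) ^+ n.
Proof.
rewrite /legendre -intFp_eq0.
have [->|a_neq0] := eqVneq (a%:~R : 'F_p) 0.
  by rewrite expr0n eqn0Ngt half_gt0.
case: ifP => [/existsP[x]|/negbT/existsPn no_root].
  rewrite -intFp_eq0 rmorphB rmorphXn subr_eq0 => /eqP a_sq.
  rewrite -a_sq -exprM mul2n expFp_double_half //.
  by apply: contraNneq a_neq0 => x0; rewrite -a_sq x0 expr0n.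
have /eqP := expFp_double_half a_neq0; rewrite -mul2n mulnC exprM sqrf_eq1.
case/orP=> /eqP an; rewrite an //; exfalso.
have : root ('X^n - 1) (a%:~R : 'F_p) by rewrite rootE !hornerE an subrr.
rewrite -prod_XsubC_sq rootE horner_prod prodf_seq_eq0 => /hasP[j].
rewrite mem_index_iota hornerXsubC subr_eq0 => j_range /eqP a_sq.
have j_lt_p : (j < p)%N by lia.
move: (no_root (Ordinal j_lt_p)).
by rewrite -intFp_eq0 rmorphB rmorphXn subr_eq0 /= a_sq => /eqP; apply.
Qed.

Lemma intr_prod_sq_sub :
  ((\prod_(1 <= i < n.+1)
      \prod_(1 <= j < n.+1 | ~~ (p%:Z %| (i%:Z) ^+ 2 - (j%:Z) ^+ 2)%Z)
        ((i%:Z) ^+ 2 - (j%:Z) ^+ 2))%:~R : 'F_p)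
  = \prod_(1 <= i < n.+1) \prod_(1 <= j < n.+1 | j != i) (sq i - sq j).
Proof.
rewrite rmorph_prod; apply: eq_big_nat => i i_range; rewrite rmorph_prod.
rewrite big_nat_cond [RHS]big_nat_cond; apply: eq_big => [j|j _].
  case j_range: (1 <= j < n.+1)%N; rewrite ?andbF ?andbT //.
  rewrite -intFp_eq0 rmorphB !rmorphXn /= subr_eq0.
  by congr (~~ _); apply/eqP/eqP => [/sq_half_inj->|->] //; lia.
by rewrite rmorphB !rmorphXn.
Qed.

End OddPrimeField.

Theorem mainTheorem10 (p : nat) (hp : prime p) (hodd : odd p) :
  ((\prod_(1 <= i < (p.-1./2).+1)
      \prod_(1 <= j < (p.-1./2).+1 | ~~ (p%:Z %| (i%:Z) ^+ 2 - (j%:Z) ^+ 2)%Z)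
        ((i%:Z) ^+ 2 - (j%:Z) ^+ 2))
   = - legendre 2 p %[mod p])%Z.
Proof.
have p_def : p = (p.-1./2).*2.+1.
  by rewrite -[in p.-1](odd_double_half p) hodd /= doubleK -{1}(odd_double_half p) hodd.
apply/eqP; rewrite eqz_mod_dvd -(intFp_eq0 hp) rmorphB rmorphN /= opprK.
rewrite (intr_prod_sq_sub hp p_def) (prod_sq_sub hp p_def) (legendre_Euler hp p_def).
by rewrite addrC subrr.
Qed.
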